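(* Let $\Omega\subset\mathbb R^d$ be bounded, $X=H=L^2(\Omega)$, $T=\mathrm{Id}$, and $J=S|_{L^2(\Omega)}$ the negative Boltzmann–Shannon entropy restricted to $L^2(\Omega)$. Let $(\lambda_n)_{n\ge0}$ be an increasing sequence of positive numbers and let $x^\dagger\in L^2(\Omega)$ satisfy $0\le x^\dagger(t)<1/e$ for all $t$ in a set $E\subset\Omega$ of positive measure. Let $x_n$ be the MHDM iterates with data $f=x^\dagger$ and penalty $S$. Then for almost every $t\in E$ and all $n\in\mathbb N$, $$x_n(t)>x_{n-1}(t)>\dots>x_0(t)>x^\dagger(t).$$
   Context: $S(x)=\int_\Omega x\log x\,dt$ if $x\ge0$ a.e. and $x\log x\in L^1(\Omega)$, $S(x)=\infty$ otherwise ($0\log0=0$). MHDM with $T=\mathrm{Id}$: $u_0=\arg\min_u\frac{\lambda_0}{2}\|u-x^\dagger\|_{L^2}^2+S(u)$, $x_0=u_0$; for $n\ge1$, $u_n=\arg\min_u\frac{\lambda_n}{2}\|x^\dagger-x_{n-1}-u\|_{L^2}^2+S(u)$, $x_n=x_{n-1}+u_n$ (the minimizers are unique). *)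

From mathcomp Require Import all_boot all_order all_algebra.
From mathcomp Require Import all_classical all_reals all_analysis.
Set Implicit Arguments. Unset Strict Implicit. Unset Printing Implicit Defensive.
Import Order.TTheory GRing.Theory Num.Theory.
Local Open Scope classical_set_scope.
Local Open Scope ring_scope.

Definition inL2 {d} {T : measurableType d} {R : realType}
  (mu : {measure set T -> \bar R}) (Om : set T) (f : T -> R) : Prop :=
  measurable_fun Om f /\ mu.-integrable Om (fun t => ((f t) ^+ 2)%:E).

Definition L2sq {d} {T : measurableType d} {R : realType}
  (mu : {measure set T -> \bar R}) (Om : set T) (f : T -> R) : \bar R :=
  (\int[mu]_(t in Om) ((f t) ^+ 2)%:E)%E.

(* negative Boltzmann-Shannon entropy: int u log u if u >= 0 a.e. and
   u log u in L^1, +oo otherwise (ln 0 = 0 in mathcomp, so 0 log 0 = 0) *)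
Definition entropyS {d} {T : measurableType d} {R : realType}
  (mu : {measure set T -> \bar R}) (Om : set T) (u : T -> R) : \bar R :=
  if pselect ({ae mu, forall t, Om t -> 0 <= u t} /\
              mu.-integrable Om (fun t => (u t * ln (u t))%:E))
  then (\int[mu]_(t in Om) (u t * ln (u t))%:E)%E
  else +oo%E.

Definition isMinL2 {d} {T : measurableType d} {R : realType}
  (mu : {measure set T -> \bar R}) (Om : set T)
  (F : (T -> R) -> \bar R) (u : T -> R) : Prop :=
  inL2 mu Om u /\ forall v, inL2 mu Om v -> (F u <= F v)%E.

Definition MHDM_iterates {d} {T : measurableType d} {R : realType}
  (mu : {measure set T -> \bar R}) (Om : set T) (lam : nat -> R) (f : T -> R)
  (u x : nat -> T -> R) : Prop :=
  isMinL2 mu Om (fun v => ((lam 0%N / 2)%:E * L2sq mu Om (fun t => (v t - f t)%R)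
                            + entropyS mu Om v)%E) (u 0%N)
  /\ x 0%N = u 0%N
  /\ (forall n, isMinL2 mu Om
        (fun v => ((lam n.+1 / 2)%:E * L2sq mu Om (fun t => (f t - x n t - v t)%R)
                   + entropyS mu Om v)%E) (u n.+1))
  /\ (forall n, x n.+1 = x n \+ u n.+1).

(* With [T = Id] every MHDM step minimises, over L^2(Om), an energy
     E_{a,h}(w) = a/2 ||w - h||^2 + S(w),
   where [h] is the current residual ([h = x^dagger] for the first step).
   For square integrable [w >= 0] the energy is the integral of the scalar
   density  g_{a,h}(w) = a/2 (w - h)^2 + w ln w.  The argument is local:
   if on a set [A] of positive measure a fixed upward shift [w -> w + eps]
   lowers the density by a fixed amount [c > 0], then adding [eps * 1_A]
   to a minimiser would strictly lower its energy; hence such sets are null.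
   Two elementary scalar estimates provide the shifts:
   - at [w = 0] (with [|h| <= K]) the slope of [w ln w] is [-oo], so a small
     step upward is profitable: every increment [u_{n+1}] is > 0 a.e.;
   - for [0 <= w <= h <= 1/e - delta] both terms of the density decrease
     when [w] increases: [u_0 > x^dagger] a.e. on [E]. *)

From mathcomp Require Import all_boot all_order all_algebra.
From mathcomp Require Import all_classical all_reals all_analysis.
From mathcomp Require Import ring lra measurable_realfun.
Import Order.TTheory GRing.Theory Num.Theory.
Local Open Scope classical_set_scope.
Local Open Scope ring_scope.
Set Implicit Arguments. Unset Strict Implicit.

Section ScalarEstimates.
Variable R : realType.
Implicit Types a h w y : R.

Definition density a h w : R := a / 2 * (w - h) ^+ 2 + w * ln w.

Lemma ln_le_subr1 y : 0 < y -> ln y <= y - 1.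
Proof.
move=> y0; have := @le_ln1Dx R (y - 1).
have -> : 1 + (y - 1) = y by ring.
by apply; lra.
Qed.

(* [w ln w] grows at most quadratically, so it is integrable for L^2 data. *)
Lemma xlnx_bound w : `|w * ln w| <= w ^+ 2 + 1.
Proof.
have [w0|w0] := leP w 0; first by rewrite ln0 // mulr0 normr0; nra.
have up := ln_le_subr1 w0.
have low : ln w^-1 <= w^-1 - 1 by apply: ln_le_subr1; rewrite invr_gt0.
rewrite lnV ?posrE // in low.
have ww : w * w^-1 = 1 by rewrite mulfV // gt_eqF.
by rewrite ler_norml; apply/andP; split; nra.
Qed.

Lemma xlnx_tangent a b : 0 <= a -> 0 < b ->
  b * ln b - a * ln a <= (b - a) * (ln b + 1).
Proof.
move=> a0 b0; have [->|a_neq0] := eqVneq a 0.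
  by rewrite mul0r !subr0; nra.
have a_gt0 : 0 < a by rewrite lt_neqAle eq_sym a_neq0.
have := ln_le_subr1 (divr_gt0 b0 a_gt0).
rewrite ln_div ?posrE // => lnba.
have aba : a * (b / a) = b by rewrite mulrC divfK // gt_eqF.
have : a * (ln b - ln a) <= a * (b / a - 1) by rewrite ler_pM2l.
nra.
Qed.

(* Tangent of [ln] at [1/e]. *)
Lemma ln_le_tangent_expRN1 y : 0 < y -> ln y <= expR 1 * y - 2.
Proof.
move=> y0; have := ln_le_subr1 (mulr_gt0 (expR_gt0 1) y0).
by rewrite lnM ?posrE ?expR_gt0 // expRK; lra.
Qed.

Lemma density_drop_at_zero a K h : 0 < a -> `|h| <= K ->
  density a h (expR (-(a / 2 + a * K + 1)))
  <= density a h 0 - expR (-(a / 2 + a * K + 1)).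
Proof.
move=> a0 hK; rewrite /density mul0r addr0 expRK.
set e := expR _.
have e0 : 0 < e := expR_gt0 _.
have K0 : 0 <= K := le_trans (normr_ge0 _) hK.
have e1 : e <= 1.
  by rewrite /e -[leRHS]expR0 ler_expR; have := mulr_ge0 (ltW a0) K0; lra.
move: hK; rewrite ler_norml => /andP[hK1 hK2].
have cross : a * e * (- h) <= a * e * K by rewrite ler_pM2l ?mulr_gt0 //; lra.
have quad : a * e * e <= a * e * 1 by rewrite ler_pM2l ?mulr_gt0.
nra.
Qed.

Lemma density_drop_below_data a delta w h : 0 < a -> 0 < delta ->
  0 <= w -> w <= h -> h <= expR (-1) - delta ->
  density a h (w + delta / (2 * (1 + a)))
  <= density a h w - delta / (2 * (1 + a)) * delta / 4.
Proof.
move=> a0 d0 w0 wh hd; rewrite /density.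
set eps := delta / (2 * (1 + a)).
have eps_def : eps * (2 * (1 + a)) = delta by rewrite /eps divfK //; lra.
have eps0 : 0 < eps by rewrite /eps divr_gt0 //; lra.
have e2 : 2 <= expR 1 :> R by have := @expR_ge1Dx R 1; lra.
have e_inv : expR 1 * expR (-1) = 1 :> R by rewrite -expRD subrr expR0.
have we0 : 0 < w + eps by lra.
have conv := xlnx_tangent w0 we0.
have tang := ln_le_tangent_expRN1 we0.
set L := ln (w + eps) in conv tang *.
have q1 : expR 1 * (w + eps) <= expR 1 * (expR (-1) - delta + eps).
  by rewrite ler_pM2l ?expR_gt0 //; lra.
have q2 : expR 1 * (eps - delta) <= eps - delta.
  have : eps - delta <= 0 by nra.
  move=> h0; have : (expR 1 - 1) * (eps - delta) <= 0 by apply: mulr_ge0_le0; lra.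
  lra.
have q3 : eps * (L + 1) <= eps * (eps - delta) by rewrite ler_pM2l //; nra.
have q4 : a * eps <= delta / 2 by nra.
have q5 : a * eps * eps <= delta / 2 * eps by rewrite ler_pM2r.
have p1 : a * eps * (w - h) <= 0 by apply: mulr_ge0_le0; [apply: mulr_ge0; lra|lra].
have p2 : eps * eps <= eps * (delta / 2) by rewrite ler_pM2l //; nra.
have shift : w + eps - w = eps by ring.
rewrite shift in conv.
have -> : a / 2 * (w + eps - h) ^+ 2
          = a / 2 * (w - h) ^+ 2 + a * eps * (w - h) + a * eps * eps / 2 by field.
lra.
Qed.

End ScalarEstimates.

Section NullSets.
Context d (T : measurableType d) (R : realType) (mu : {measure set T -> \bar R}).

Lemma null_set_ae (A : set T) : measurable A -> mu A = 0%E ->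
  {ae mu, forall t, ~ A t}.
Proof.
move=> mA muA; exists A; split => // t /=.
by rewrite /setC /=; apply: contra_notP.
Qed.

Lemma measurable_test (Om : set T) (b : T -> bool) : measurable Om ->
  measurable_fun Om b -> measurable (Om `&` [set t | b t]).
Proof. by move=> mOm mb; apply: (mb mOm [set true]). Qed.

End NullSets.

Section SquareIntegrable.
Context d (T : measurableType d) (R : realType) (mu : {measure set T -> \bar R})
  (Om : set T) (mOm : measurable Om) (finOm : (mu Om < +oo)%E).

Lemma integrable_cst (k : R) : mu.-integrable Om (fun _ => k%:E).
Proof.
apply/integrableP; split; first exact: measurable_cst.
rewrite (eq_integral (cst `|k|%:E)); last by move=> t _.
by rewrite integral_cst // lte_mul_pinfty.
Qed.

Lemma integrable_indic_scale (k : R) (A : set T) : measurable A ->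
  mu.-integrable Om (fun t => (k * \1_A t)%:E).
Proof.
move=> mA; apply: (le_integrable mOm) (integrable_cst `|k|).
  apply: measurableT_comp (@EFin_measurable R setT) _.
  by apply: measurable_funM; [exact: measurable_cst|exact: measurable_indic].
move=> t _; rewrite !abse_EFin lee_fin indicE normr_id.
by case: (t \in A); rewrite ?mulr1 ?mulr0 ?normr0.
Qed.

Lemma inL2_le (f b : T -> R) : measurable_fun Om f ->
  mu.-integrable Om (fun t => (b t)%:E) ->
  (forall t, Om t -> f t ^+ 2 <= b t) -> inL2 mu Om f.
Proof.
move=> mf ib fb; split => //; apply: le_integrable ib => //.
  exact: measurableT_comp (@EFin_measurable R setT) (measurable_funX 2 mf).
move=> t Ot; rewrite !gee0_abs ?lee_fin ?fb //; last exact: sqr_ge0.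
exact: le_trans (sqr_ge0 _) (fb t Ot).
Qed.

Lemma inL2D f g : inL2 mu Om f -> inL2 mu Om g -> inL2 mu Om (f \+ g).
Proof.
move=> [mf if2] [mg ig2].
apply: (@inL2_le _ (fun t => 2 * f t ^+ 2 + 2 * g t ^+ 2)).
- exact: measurable_funD.
- have := integrableD mOm (integrableZl mOm 2 if2) (integrableZl mOm 2 ig2).
  by apply: (eq_integrable mOm) => t _ /=; rewrite EFinD !EFinM.
- by move=> t _ /=; have := sqr_ge0 (f t - g t); lra.
Qed.

Lemma inL2N f : inL2 mu Om f -> inL2 mu Om (fun t => - f t).
Proof.
move=> [mf if2]; split; first exact: measurable_funN.
by apply: (eq_integrable mOm) if2 => t _; rewrite sqrrN.
Qed.

Lemma inL2_bounded (f : T -> R) (M : R) : measurable_fun Om f ->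
  (forall t, Om t -> `|f t| <= M) -> inL2 mu Om f.
Proof.
move=> mf fM; apply: (@inL2_le _ (fun _ => M ^+ 2)) => //.
  exact: integrable_cst.
by move=> t Ot; have := fM t Ot; rewrite ler_norml => /andP[? ?]; nra.
Qed.

Lemma inL2_0 : inL2 mu Om (fun _ => 0).
Proof.
by apply: (@inL2_bounded _ 0) => [|t _]; [exact: measurable_cst|rewrite normr0].
Qed.

Lemma integrable_xlnx w : inL2 mu Om w ->
  mu.-integrable Om (fun t => (w t * ln (w t))%:E).
Proof.
move=> [mw iw2]; apply: le_integrable (integrableD mOm iw2 (integrable_cst 1)) => //.
  apply: measurableT_comp (@EFin_measurable R setT) _.
  by apply: measurable_funM => //; exact: measurableT_comp (@measurable_ln R) mw.
move=> t _; rewrite -EFinD !abse_EFin lee_fin.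
by rewrite (ger0_norm (_ : 0 <= w t ^+ 2 + 1)) ?xlnx_bound //; nra.
Qed.

(* If [f - c 1_A] dominates [g] on [Om] while [g] has at least the integral
   of [f], then [A] is null: the gap [c mu(A)] must vanish. *)
Lemma integral_gap_null (f g : T -> R) (A : set T) (c : R) :
  measurable A -> A `<=` Om -> 0 < c ->
  mu.-integrable Om (fun t => (f t)%:E) -> mu.-integrable Om (fun t => (g t)%:E) ->
  (\int[mu]_(t in Om) (f t)%:E <= \int[mu]_(t in Om) (g t)%:E)%E ->
  (forall t, Om t -> g t <= f t - c * \1_A t) -> mu A = 0%E.
Proof.
move=> mA AOm c0 intf intg fg gf.
have intc := integrable_indic_scale c mA.
have gap : (\int[mu]_(t in Om) (g t)%:E
            <= \int[mu]_(t in Om) (f t)%:E - \int[mu]_(t in Om) (c * \1_A t)%:E)%E.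
  rewrite -(integralB_EFin mOm intf intc).
  apply: le_integral => //; first exact: integrableB.
  by move=> t /[!inE] Ot; rewrite -EFinB lee_fin; exact: gf.
have int_c : (\int[mu]_(t in Om) (c * \1_A t)%:E = c%:E * mu A)%E.
  under eq_integral do rewrite EFinM.
  rewrite integralZl //; first by rewrite integral_indic // setIidl.
  by apply: (eq_integrable mOm) (integrable_indic_scale 1 mA) => t _; rewrite mul1r.
have muA_fin : mu A \is a fin_num.
  rewrite ge0_fin_numE ?measure_ge0 //; apply: le_lt_trans finOm.
  by apply: le_measure; rewrite ?inE.
move: (le_trans fg gap); rewrite int_c.
rewrite -(fineK (integrable_fin_num mOm intf)) -(fineK muA_fin) -EFinM -EFinB lee_fin.
have muA0 : 0 <= fine (mu A) by apply: fine_ge0; exact: measure_ge0.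
by rewrite -(fineK muA_fin) => ?; congr EFin; nra.
Qed.

End SquareIntegrable.

Section Minimisers.
Context d (T : measurableType d) (R : realType) (mu : {measure set T -> \bar R})
  (Om : set T) (mOm : measurable Om) (finOm : (mu Om < +oo)%E).

Definition energy (a : R) (h w : T -> R) : \bar R :=
  ((a / 2)%:E * L2sq mu Om (fun t => (w t - h t)%R) + entropyS mu Om w)%E.

Lemma energy_residual a (f g : T -> R) :
  energy a (fun t => f t - g t) =
  (fun v => ((a / 2)%:E * L2sq mu Om (fun t => (f t - g t - v t)%R)
             + entropyS mu Om v)%E).
Proof.
apply: funext => v; rewrite /energy /L2sq; congr (_ * _ + _)%E.
by apply: eq_integral => t _; congr EFin; ring.
Qed.

Lemma integrable_density a h w : inL2 mu Om h -> inL2 mu Om w ->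
  mu.-integrable Om (fun t => (density a (h t) (w t))%:E).
Proof.
move=> ih iw; have iq := (inL2D mOm iw (inL2N mOm ih)).2.
have := integrableD mOm (integrableZl mOm (a / 2) iq) (integrable_xlnx mOm finOm iw).
by apply: (eq_integrable mOm) => t _; rewrite /density /= EFinD EFinM.
Qed.

Lemma energy_integral a h w : inL2 mu Om h -> inL2 mu Om w ->
  {ae mu, forall t, Om t -> 0 <= w t} ->
  energy a h w = (\int[mu]_(t in Om) (density a (h t) (w t))%:E)%E.
Proof.
move=> ih iw w_ge0; have iq := (inL2D mOm iw (inL2N mOm ih)).2.
have ix := integrable_xlnx mOm finOm iw.
rewrite /energy /entropyS; case: pselect => [?|no]; last by exfalso; apply: no.
rewrite /L2sq -integralZl // -integralD //; exact: integrableZl.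
Qed.

(* Finite energy forces [w >= 0] a.e., the entropy being [+oo] otherwise. *)
Lemma energy_fin_ae_ge0 a h w : 0 <= a -> (energy a h w < +oo)%E ->
  {ae mu, forall t, Om t -> 0 <= w t}.
Proof.
move=> a0; rewrite /energy /entropyS; case: pselect => [[? ?] _|?] //.
rewrite addey ?ltxx //.
have : (0 <= (a / 2)%:E * L2sq mu Om (fun t => (w t - h t)%R))%E.
  apply: mule_ge0; first by rewrite lee_fin; lra.
  by apply: integral_ge0 => t _; rewrite lee_fin sqr_ge0.
by case: (_ * _)%E.
Qed.

Lemma energy0_fin a h : inL2 mu Om h -> (energy a h (fun _ => 0%R) < +oo)%E.
Proof.
move=> ih; rewrite energy_integral //; [|exact: inL2_0 | exact: aeW].
exact: integrable_lty (integrable_density _ ih (inL2_0 mOm finOm)).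
Qed.

(* Minimisers have finite energy, hence are nonnegative a.e. *)
Lemma minimiser_ae_ge0 a h u : 0 < a -> inL2 mu Om h ->
  isMinL2 mu Om (energy a h) u -> {ae mu, forall t, Om t -> 0 <= u t}.
Proof.
move=> a0 ih [_ umin]; apply: (energy_fin_ae_ge0 (ltW a0)).
exact: le_lt_trans (umin _ (inL2_0 mOm finOm)) (energy0_fin _ ih).
Qed.

(* Perturbation principle: if the shift [w -> w + eps] lowers the density of
   a minimiser by [c > 0] on [A], then [A] is null (otherwise adding
   [eps 1_A] would lower the energy by [c mu(A)]). *)
Lemma minimiser_perturbation_null a h u (A : set T) (eps c : R) :
  0 < a -> inL2 mu Om h -> isMinL2 mu Om (energy a h) u ->
  measurable A -> A `<=` Om -> 0 < eps -> 0 < c ->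
  (forall t, A t -> density a (h t) (u t + eps) <= density a (h t) (u t) - c) ->
  mu A = 0%E.
Proof.
move=> a0 ih umin mA AOm eps0 c0 drop.
have u_ge0 := minimiser_ae_ge0 a0 ih umin.
have [iu umin_v] := umin.
pose v t := u t + eps * \1_A t.
have bump_ge0 t : 0 <= eps * \1_A t.
  by rewrite indicE; case: (t \in A); rewrite ?mulr1 ?mulr0 // ltW.
have iv : inL2 mu Om v.
  apply: (inL2D mOm iu (@inL2_bounded _ _ _ _ _ mOm finOm _ eps _ _)).
    by apply: measurable_funM; [exact: measurable_cst|exact: measurable_indic].
  move=> t _; rewrite ger0_norm // indicE.
  by case: (t \in A); rewrite ?mulr1 ?mulr0 // ltW.
have v_ge0 : {ae mu, forall t, Om t -> 0 <= v t}.
  by apply: filterS u_ge0 => t ut Ot; have := ut Ot; have := bump_ge0 t; rewrite /v; lra.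
apply: (integral_gap_null mOm finOm mA AOm c0 (integrable_density a ih iu)
          (integrable_density a ih iv)).
  by rewrite -!energy_integral //; exact: umin_v.
move=> t Ot; rewrite /v indicE; have [At|nAt] := boolP (t \in A).
  by rewrite !mulr1; exact: drop (set_mem At).
by rewrite !mulr0 addr0 subr0.
Qed.

(* Each MHDM increment is positive a.e.: the density is strictly lowered by
   leaving [0], uniformly on the sets where [|h| <= k]. *)
Lemma minimiser_ae_gt0 a h u : 0 < a -> inL2 mu Om h ->
  isMinL2 mu Om (energy a h) u -> {ae mu, forall t, Om t -> 0 < u t}.
Proof.
move=> a0 ih umin.
pose Z (k : nat) := Om `&` [set t | (u t == 0) && (`|h t| <= k%:R)].
have Z_null k : {ae mu, forall t, ~ Z k t}.
  have mZ : measurable (Z k).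
    apply: measurable_test => //; apply: measurable_and.
      exact: measurable_fun_eqr umin.1.1 (measurable_cst _).
    apply: measurable_fun_ler (measurable_cst _).
    exact: measurableT_comp (@normr_measurable R setT) ih.1.
  apply: (null_set_ae mZ).
  pose e := expR (-(a / 2 + a * k%:R + 1)).
  apply: (minimiser_perturbation_null (eps := e) (c := e) a0 ih umin mZ).
  - exact: subIsetl.
  - exact: expR_gt0.
  - exact: expR_gt0.
  move=> t [_ /andP[/eqP -> hk]]; rewrite add0r.
  exact: density_drop_at_zero a0 hk.
apply: filterS2 (minimiser_ae_ge0 a0 ih umin) (ae_foralln Z_null).
move=> t u_ge0 notZ Ot; rewrite lt_neqAle eq_sym u_ge0 // andbT.
apply/negP => /eqP u0; apply: (notZ (Num.Def.archi_bound `|h t|)).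
split=> //; rewrite /= u0 eqxx /=.
exact: ltW (archi_boundP (normr_ge0 _)).
Qed.

(* For data [0 <= h < 1/e] on [E], the minimiser exceeds the data a.e. on
   [E]: where [0 <= u <= h <= 1/e - 1/(k+1)] an upward shift is profitable. *)
Lemma minimiser_above_small_data a h u (E : set T) : 0 < a -> inL2 mu Om h ->
  isMinL2 mu Om (energy a h) u -> measurable E -> E `<=` Om ->
  (forall t, E t -> 0 <= h t < expR (-1)) -> {ae mu, forall t, E t -> h t < u t}.
Proof.
move=> a0 ih umin mE EOm hE.
pose A (k : nat) := E `&` (Om `&` [set t | ((0 <= u t) && (u t <= h t))
                                          && (h t <= expR (-1) - k.+1%:R^-1)]).
have A_null k : {ae mu, forall t, ~ A k t}.
  have mu_u := umin.1.1.
  have mA : measurable (A k).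
    apply: measurableI => //; apply: measurable_test => //.
    apply: measurable_and; first apply: measurable_and.
    - exact: measurable_fun_ler (measurable_cst _) mu_u.
    - exact: measurable_fun_ler mu_u ih.1.
    - exact: measurable_fun_ler ih.1 (measurable_cst _).
  pose delta : R := k.+1%:R^-1; pose eps := delta / (2 * (1 + a)).
  have delta0 : 0 < delta by rewrite invr_gt0.
  have eps0 : 0 < eps by rewrite divr_gt0 //; lra.
  apply: (null_set_ae mA).
  apply: (minimiser_perturbation_null (c := eps * delta / 4) a0 ih umin mA _ eps0).
  - by move=> t [Et _]; exact: EOm.
  - by apply: divr_gt0; [exact: mulr_gt0|lra].
  move=> t [_ [_ /andP[/andP[u_ge0 u_le_h] h_small]]].
  exact: density_drop_below_data a0 delta0 u_ge0 u_le_h h_small.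
apply: filterS2 (minimiser_ae_ge0 a0 ih umin) (ae_foralln A_null).
move=> t u_ge0 notA Et; have Ot := EOm t Et.
have /andP[h_ge0 h_small] := hE t Et.
rewrite ltNge; apply/negP => u_le_h.
have [k hk] := ltr_add_invr h_small.
apply: (notA k); split=> //; split=> //=.
by rewrite u_ge0 // u_le_h lerBrDr ltW.
Qed.

End Minimisers.

Unset Implicit Arguments. Set Strict Implicit.

(* Every MHDM step minimises the energy of the current residual
   [x^dagger - x_{n-1}]. *)
Theorem mainTheorem5 (d : measure_display) (T : measurableType d) (R : realType)
  (mu : {measure set T -> \bar R}) (Om : set T)
  (mOm : measurable Om) (finOm : (mu Om < +oo)%E)
  (lam : nat -> R) (lam_pos : forall n, 0 < lam n)
  (lam_incr : forall n, lam n < lam n.+1)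
  (xd : T -> R) (xdL2 : inL2 mu Om xd)
  (E : set T) (mE : measurable E) (EOm : E `<=` Om) (Epos : (0 < mu E)%E)
  (xdE : forall t, E t -> 0 <= xd t < expR (-1))
  (u x : nat -> T -> R) (hit : MHDM_iterates mu Om lam xd u x) :
  {ae mu, forall t, E t -> xd t < x 0%N t /\ forall n, x n t < x n.+1 t}.
Proof.
have [u0_min [x0_u0 [uS_min xS]]] := hit.
have x_L2 n : inL2 mu Om (x n).
  elim: n => [|n IH]; first by rewrite x0_u0; exact: u0_min.1.
  by rewrite xS; exact: (inL2D mOm IH (uS_min n).1).
have residual_L2 n : inL2 mu Om (fun t => xd t - x n t).
  exact: (inL2D mOm xdL2 (inL2N mOm (x_L2 n))).
have uS_energy n : isMinL2 mu Om (energy mu Om (lam n.+1) (fun t => xd t - x n t)) (u n.+1).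
  by rewrite energy_residual; exact: uS_min.
have first_step := minimiser_above_small_data mOm finOm (lam_pos 0%N) xdL2 u0_min mE EOm xdE.
have increments_pos := ae_foralln (fun n =>
  minimiser_ae_gt0 mOm finOm (lam_pos n.+1) (residual_L2 n) (uS_energy n)).
apply: filterS2 first_step increments_pos => t xd_lt_u0 uS_gt0 Et.
split; first by rewrite x0_u0; exact: xd_lt_u0.
by move=> n; rewrite xS /= ltrDl; exact: uS_gt0 n (EOm t Et).
Qed.
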